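(* Let $m\ge1$, let $\vartheta=\vartheta_m$ be the degree-$m$ random metallic mean substitution, $\mathcal{S}_m=\{a^iba^{m-i}\mid0\le i\le m\}$, $p\ge0$, and $u$ a finite word over $\{a,b\}$. If the set $\vartheta^p(a)\,u\,\mathcal{S}_m$ contains a $\vartheta$-legal word, then for every $0\le j\le m$ the set $\vartheta^p(a)\,\vartheta(u)\,(\vartheta(b))^j\,\mathcal{S}_m$ contains a $\vartheta$-legal word.
   Context: The degree-$m$ random metallic mean substitution is $\vartheta_m\colon a\mapsto\{a^iba^{m-i}\mid0\le i\le m\},\ b\mapsto\{a\}$ (for $m=1$ this is the random Fibonacci substitution $a\mapsto\{ab,ba\}, b\mapsto\{a\}$). It is extended to words by set concatenation $\vartheta(w_1\cdots w_k)=\vartheta(w_1)\cdots\vartheta(w_k)$ with $AB=\{xy\mid x\in A,y\in B\}$ (single words identified with singletons), and to sets by unions; $\vartheta^p$ is the $p$-fold iterate, $\vartheta^0(a)=\{a\}$; for a set $A$, $A^0=\{\text{empty word}\}$ and $A^j$ is the $j$-fold set concatenation. A word is $\vartheta$-legal if it is a subword of some word in $\vartheta^k(x)$ for some $k\ge0$ and letter $x$. *)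

From HB Require Import structures.
From mathcomp Require Import all_boot.
Set Implicit Arguments. Unset Strict Implicit. Unset Printing Implicit Defensive.

Inductive letter := la | lb.

Definition letter_eqb (x y : letter) : bool :=
  match x, y with la, la | lb, lb => true | _, _ => false end.
Lemma letter_eqP : Equality.axiom letter_eqb.
Proof. by case; case; constructor. Qed.
HB.instance Definition _ := hasDecEq.Build letter letter_eqP.

Definition word := seq letter.

(* Finite sets of words are represented as lists; membership is \in. *)
Definition setcat (A B : seq word) : seq word := [seq x ++ y | x <- A, y <- B].

Definition setpow (A : seq word) (j : nat) : seq word := iter j (setcat A) [:: [::]].

Definition theta_letter (m : nat) (x : letter) : seq word :=
  match x with
  | la => [seq nseq i la ++ lb :: nseq (m - i) la | i <- iota 0 m.+1]
  | lb => [:: [:: la]]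
  end.

Definition Sm (m : nat) : seq word := theta_letter m la.

Definition theta_word (m : nat) (w : word) : seq word :=
  foldr (fun x acc => setcat (theta_letter m x) acc) [:: [::]] w.

Definition theta_set (m : nat) (S : seq word) : seq word :=
  flatten (map (theta_word m) S).

Definition theta_iter (m p : nat) (S : seq word) : seq word := iter p (theta_set m) S.

Definition legal (m : nat) (w : word) : Prop :=
  exists (k : nat) (x : letter) (v : word),
    v \in theta_iter m k [:: [:: x]] /\ infix w v.

(* Any two theta-images of a word have a common theta-image: for the letter [a], every word
   of [S_m] has [(a^(c+1) b a^(m-c-1))^m a] among its images.  By induction on [p], if [y] is in
   theta^p(v) and [t] in theta(v), then some theta-image of [y] lies in theta^p(t).  Taking
   [v = a] and [t] in theta(a) ending with [a], some theta-image of [x] in theta^p(a) ends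
   with some [x'] in theta^p(a).  Legality is preserved by theta and by subwords, so a
   theta-image of the legal word [x u s] is legal; choosing the image of [s] to start with
   [a^j s'] for some [s'] in [S_m] exhibits [x' f a^j s'] as a legal subword, with [f] any
   theta-image of [u] and [a^j] the unique word of theta(b)^j. *)

From mathcomp Require Import all_boot.
Set Implicit Arguments. Unset Strict Implicit. Unset Printing Implicit Defensive.

Lemma mem_setcat (A B : seq word) x y : x \in A -> y \in B -> x ++ y \in setcat A B.
Proof. exact: allpairs_f. Qed.

Lemma setcatP (A B : seq word) z : z \in setcat A B ->
  exists x y, [/\ x \in A, y \in B & z = x ++ y].
Proof. by move/allpairsP=> [[x y] /= [hx hy ->]]; exists x, y. Qed.

Lemma prefix_nseq (T : eqType) (x : T) j k : j <= k -> prefix (nseq j x) (nseq k x).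
Proof. by move=> /subnKC <-; rewrite nseqD prefix_prefix. Qed.

Section Substitution.
Variable m : nat.

Lemma theta_word_cat v1 v2 y1 y2 : y1 \in theta_word m v1 -> y2 \in theta_word m v2 ->
  y1 ++ y2 \in theta_word m (v1 ++ v2).
Proof.
elim: v1 y1 => [|x v1 IH] y1 /=; first by rewrite inE => /eqP ->.
by move=> /setcatP [a [b [ha hb ->]]] h2; rewrite -catA mem_setcat ?IH.
Qed.

Lemma theta_word_catP v1 v2 y : y \in theta_word m (v1 ++ v2) ->
  exists y1 y2, [/\ y1 \in theta_word m v1, y2 \in theta_word m v2 & y = y1 ++ y2].
Proof.
elim: v1 y => [|x v1 IH] y /=; first by exists [::], y; rewrite inE eqxx.
move=> /setcatP [a [b [ha /IH [y1 [y2 [h1 h2 ->]]] ->]]].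
by exists (a ++ y1), y2; rewrite catA mem_setcat.
Qed.

Lemma theta_word_nseq n x w : w \in theta_letter m x ->
  flatten (nseq n w) \in theta_word m (nseq n x).
Proof. by move=> hw; elim: n => [|n IH] /=; rewrite ?inE ?mem_setcat. Qed.

Lemma theta_letter_nonempty x : exists y, y \in theta_letter m x.
Proof.
case: x; last by exists [:: la]; rewrite inE.
by exists (lb :: nseq (m - 0) la); apply/mapP; exists 0.
Qed.

Lemma theta_word_nonempty v : exists y, y \in theta_word m v.
Proof.
elim: v => [|x v [y hy]]; first by exists [::]; rewrite inE.
by have [a ha] := theta_letter_nonempty x; exists (a ++ y); apply: mem_setcat.
Qed.

Definition derives q v y := y \in theta_iter m q [:: v].

Lemma mem_theta_iter q S y :
  y \in theta_iter m q S <-> exists2 s, s \in S & derives q s y.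
Proof.
rewrite /derives; elim: q y => [|q IH] y /=.
  by split=> [h | [s hs]]; [exists y; rewrite ?inE | rewrite inE => /eqP ->].
split=> [/flatten_mapP [x /IH [s hs hx] hy] | [s hs /flatten_mapP [x hx hy]]].
  by exists s => //; apply/flatten_mapP; exists x.
by apply/flatten_mapP; exists x => //; apply/IH; exists s.
Qed.

Lemma derives0 v y : derives 0 v y <-> y = v.
Proof. by rewrite /derives /= inE; split => [/eqP|->]. Qed.

Lemma derivesS q v y :
  derives q.+1 v y <-> exists2 y', derives q v y' & y \in theta_word m y'.
Proof. by rewrite /derives /theta_iter iterS; split => /flatten_mapP. Qed.

Lemma derivesSl q v y :
  derives q.+1 v y <-> exists2 v', v' \in theta_word m v & derives q v' y.
Proof. by rewrite {1}/derives /theta_iter iterSr /theta_set /= cats0; apply: mem_theta_iter. Qed.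

Lemma derives_catP q v1 v2 y : derives q (v1 ++ v2) y ->
  exists y1 y2, [/\ derives q v1 y1, derives q v2 y2 & y = y1 ++ y2].
Proof.
elim: q y => [|q IH] y.
  by move=> /derives0 ->; exists v1, v2; split => //; apply/derives0.
move=> /derivesS [_ /IH [z1 [z2 [h1 h2 ->]]] /theta_word_catP [y1 [y2 [k1 k2 ->]]]].
by exists y1, y2; split => //; apply/derivesS; [exists z1 | exists z2].
Qed.

Lemma legal_infix w w' : legal m w -> infix w' w -> legal m w'.
Proof. by move=> [k [x [v [hv /(infix_trans _) hi]]]] hw'; exists k, x, v; rewrite hi. Qed.

Lemma legal_theta w w' : legal m w -> w' \in theta_word m w -> legal m w'.
Proof.
move=> [k [x [v [hv /infixP [l [r Ev]]]]]] hw'.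
have [[l' hl] [r' hr]] := (theta_word_nonempty l, theta_word_nonempty r).
exists k.+1, x, (l' ++ w' ++ r'); split; last exact: infix_infix.
by apply/derivesS; exists v; rewrite // Ev !theta_word_cat.
Qed.

Lemma nseq_la_setpow j : nseq j la \in setpow (theta_letter m lb) j.
Proof. by elim: j => [|j IH]; rewrite ?inE // /setpow iterS -[nseq _ _]cat1s mem_setcat ?inE. Qed.


Definition block c := nseq c la ++ lb :: nseq (m - c) la.

Lemma block_Sm c : c <= m -> block c \in Sm m.
Proof. by move=> hc; apply/mapP; exists c; rewrite ?mem_iota. Qed.

Lemma block_cat_la c : c < m -> block c.+1 ++ [:: la] = la :: block c.
Proof.
move=> hc; rewrite /block -catA /=; congr (_ :: _ ++ _ :: _).
by rewrite -[_ ++ [:: la]]/(nseq _ la ++ nseq 1 la) -nseqD addn1 subnSK.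
Qed.

Lemma flatten_block_cat_la c n : c < m ->
  flatten (nseq n (block c.+1)) ++ [:: la] = la :: flatten (nseq n (block c)).
Proof.
move=> hc; elim: n => [|n IH] //.
have flattenS s k : flatten (nseq k.+1 s) = s ++ flatten (nseq k s) by [].
by rewrite !flattenS -catA IH -cat1s catA block_cat_la.
Qed.

(* The [a] produced by the [b] of [s] shifts the [block c] images of the letters after it. *)
Lemma theta_Sm_common c s : c < m -> s \in Sm m ->
  flatten (nseq m (block c.+1)) ++ [:: la] \in theta_word m s.
Proof.
move=> hc /mapP [i]; rewrite mem_iota ltnS => /andP [_ hi] ->.
have hb : la :: flatten (nseq (m - i) (block c)) \in theta_word m (lb :: nseq (m - i) la).
  by apply: (@mem_setcat _ _ [:: la]); rewrite ?inE // theta_word_nseq // block_Sm // ltnW.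
have := theta_word_cat (theta_word_nseq i (block_Sm hc)) hb.
by rewrite -flatten_block_cat_la // catA -flatten_cat -nseqD subnKC.
Qed.

Hypothesis m_gt0 : 0 < m.

Lemma theta_letter_common_image x a1 a2 :
  a1 \in theta_letter m x -> a2 \in theta_letter m x ->
  exists c, c \in theta_word m a1 /\ c \in theta_word m a2.
Proof.
case: x => [h1 h2 | ].
  by exists (flatten (nseq m (block 1)) ++ [:: la]); rewrite !theta_Sm_common.
rewrite !inE => /eqP -> /eqP ->; have [y hy] := theta_word_nonempty [:: la]; by exists y.
Qed.

Lemma theta_word_common_image v v1 v2 :
  v1 \in theta_word m v -> v2 \in theta_word m v ->
  exists c, c \in theta_word m v1 /\ c \in theta_word m v2.
Proof.
elim: v v1 v2 => [|x v IH] v1 v2 /=.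
  by rewrite !inE => /eqP -> /eqP ->; exists [::]; rewrite inE.
move=> /setcatP [a1 [b1 [ha1 hb1 ->]]] /setcatP [a2 [b2 [ha2 hb2 ->]]].
have [c [hc1 hc2]] := theta_letter_common_image ha1 ha2.
have [d [hd1 hd2]] := IH _ _ hb1 hb2.
by exists (c ++ d); rewrite !theta_word_cat.
Qed.

Lemma derives_theta_commute q v y t : derives q v y -> t \in theta_word m v ->
  exists2 z, z \in theta_word m y & derives q t z.
Proof.
elim: q v y t => [|q IH] v y t.
  by move=> /derives0 -> ht; exists t => //; apply/derives0.
move=> /derivesSl [v' hv' hy] ht; have [t' [h1 h2]] := theta_word_common_image hv' ht.
by have [z hz hz'] := IH _ _ _ hy h1; exists z => //; apply/derivesSl; exists t'.
Qed.

Lemma theta_Sm_prefix s j : s \in Sm m -> j <= m ->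
  exists t s', [/\ t \in theta_word m s, s' \in Sm m & prefix (nseq j la ++ s') t].
Proof.
move=> hs hj; exists (flatten (nseq m (block m)) ++ [:: la]), (block (m - j)).
split; [by rewrite -{2}(prednK m_gt0) theta_Sm_common // prednK | exact/block_Sm/leq_subr | ].
have -> : nseq j la ++ block (m - j) = nseq m la ++ lb :: nseq j la.
  by rewrite /block subKn // catA -nseqD subnKC.
have -> : flatten (nseq m (block m)) = block m ++ flatten (nseq m.-1 (block m)).
  by rewrite -{1}(prednK m_gt0).
rewrite -catA {1}/block subnn -catA prefix_catr // prefix_cons eqxx /=.
case E : m.-1 => [|n] /=.
  by move: hj; rewrite -(prednK m_gt0) E; case: j => [|[|]].
by rewrite /block -!catA; apply/prefix_catl/prefix_nseq.
Qed.

Lemma theta_la_rcons_la : exists v, v ++ [:: la] \in theta_word m [:: la].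
Proof.
exists (lb :: nseq m.-1 la); rewrite -[_ ++ _]cats0; apply: mem_setcat; last by rewrite inE.
by have := block_Sm (leq0n m); rewrite /block subn0 -{1}(prednK m_gt0) -addn1 nseqD.
Qed.

End Substitution.

Theorem mainTheorem9 (m p : nat) (u : word) :
  1 <= m ->
  (exists w, w \in setcat (setcat (theta_iter m p [:: [:: la]]) [:: u]) (Sm m)
             /\ legal m w) ->
  forall j : nat, j <= m ->
    exists w, w \in setcat (setcat (setcat (theta_iter m p [:: [:: la]])
                                           (theta_word m u))
                                   (setpow (theta_letter m lb) j))
                           (Sm m)
              /\ legal m w.
Proof.
move=> m_gt0 [_ [/setcatP [_ [s [/setcatP [x [_ [hx /[1!inE] /eqP -> ->]]] hs ->]]]
  legal_w]] j hj.
have [v hv] := theta_la_rcons_la m_gt0.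
have [z hz /derives_catP [z1 [x' [_ hx' Ez]]]] := derives_theta_commute m_gt0 hx hv.
have [f hf] := theta_word_nonempty m u.
have [t [s' [ht hs' /prefixP [r Et]]]] := theta_Sm_prefix m_gt0 hs hj.
exists (((x' ++ f) ++ nseq j la) ++ s'); split; first by rewrite !mem_setcat ?nseq_la_setpow.
have legal_zft : legal m (z ++ f ++ t).
  by apply: legal_theta legal_w _; rewrite -catA !theta_word_cat.
apply: legal_infix legal_zft _; rewrite Ez Et -!catA.
by apply: infix_catl; rewrite !catA prefix_infix.
Qed.
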